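(* The class of graphs with no cycle with a unique chord is 2-cutset-safe.
   Context: All graphs are finite and simple. A cycle in $G$ is a set of distinct vertices $c_1,\dots,c_k$ with $c_1c_2,\dots,c_{k-1}c_k,c_kc_1\in E(G)$; any other edge of $G$ between two of these vertices is a chord. A graph contains a cycle with a unique chord if it has a cycle with exactly one chord; the class in question consists of graphs in which every cycle has no chord or at least two chords. A connected graph $G$ has a 1-cutset if there is $x$ with $G\setminus\{x\}$ having at least two components. A 2-cutset is a pair $u,v$ with $G\setminus\{u,v\}$ not connected. For a component $C$ of $G\setminus\{u,v\}$, $\operatorname{cl}(C)$ is obtained from the subgraph induced by $C\cup\{u,v\}$ by adding the edge $uv$, and $\operatorname{cl}^*(C)$ from $\operatorname{cl}(C)$ by subdividing $uv$ exactly once. A hereditary class $\mathcal{F}$ is 2-cutset-safe if for every $G\in\mathcal{F}$ with no 1-cutset, every 2-cutset $\{u,v\}$ of $G$ and every component $C$ of $G\setminus\{u,v\}$, either $\operatorname{cl}(C)\in\mathcal{F}$ or $\operatorname{cl}^*(C)\in\mathcal{F}$. *)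

From mathcomp Require Import all_boot.
Set Implicit Arguments. Unset Strict Implicit. Unset Printing Implicit Defensive.

Record sgraph := SGraph {
  vert :> finType;
  adj : rel vert;
  adj_sym : symmetric adj;
  adj_irr : irreflexive adj }.

Section Graphs.
Variable G : sgraph.

Definition is_cycle (c : seq G) : bool :=
  [&& uniq c, 2 < size c & cycle (@adj G) c].

Definition chords (c : seq G) : {set {set G}} :=
  [set [set x; y] | x in c, y in c &
     [&& adj x y, next c x != y & next c y != x]].

Definition adj_minus (X : {set G}) : rel G :=
  [rel a b | [&& adj a b, a \notin X & b \notin X]].

Definition disconnected_minus (X : {set G}) : Prop :=
  exists x y : G, [/\ x \notin X, y \notin X & ~~ connect (adj_minus X) x y].

Definition has_1cutset : Prop := exists x : G, disconnected_minus [set x].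

Definition two_cutset (u v : G) : Prop := u != v /\ disconnected_minus [set u; v].

Definition component (X C : {set G}) : Prop :=
  exists2 x : G, x \notin X & C = [set y | (y \notin X) && connect (adj_minus X) x y].

Definition ind_vert (S : {set G}) : finType := {x : G | x \in S}.

Definition ind_adj (S : {set G}) : rel (ind_vert S) :=
  fun a b => adj (val a) (val b).

Lemma ind_adj_sym S : symmetric (@ind_adj S).
Proof. by move=> a b; rewrite /ind_adj adj_sym. Qed.

Lemma ind_adj_irr S : irreflexive (@ind_adj S).
Proof. by move=> a; rewrite /ind_adj adj_irr. Qed.

Definition induced (S : {set G}) : sgraph :=
  @SGraph (ind_vert S) (@ind_adj S) (@ind_adj_sym S) (@ind_adj_irr S).

(* induced subgraph on C ∪ {u,v} plus the edge uv *)
Definition cl_adj (u v : G) (C : {set G}) : rel (ind_vert (C :|: [set u; v])) :=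
  fun a b => (val a != val b) &&
             (adj (val a) (val b) || ([set val a; val b] == [set u; v])).

Lemma cl_adj_sym u v C : symmetric (@cl_adj u v C).
Proof.
move=> a b; rewrite /cl_adj eq_sym adj_sym.
by rewrite [[set val b; val a]]setUC.
Qed.

Lemma cl_adj_irr u v C : irreflexive (@cl_adj u v C).
Proof. by move=> a; rewrite /cl_adj eqxx. Qed.

Definition cl (u v : G) (C : {set G}) : sgraph :=
  @SGraph (ind_vert (C :|: [set u; v])) (@cl_adj u v C)
          (@cl_adj_sym u v C) (@cl_adj_irr u v C).

(* induced subgraph on C ∪ {u,v} plus a new vertex (None) adjacent
   exactly to u and v, i.e. the edge uv subdivided once *)
Definition clstar_adj (u v : G) (C : {set G})
  : rel (option (ind_vert (C :|: [set u; v]))) :=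
  fun a b => match a, b with
             | Some x, Some y => adj (val x) (val y)
             | None, Some y => val y \in [set u; v]
             | Some x, None => val x \in [set u; v]
             | None, None => false
             end.

Lemma clstar_adj_sym u v C : symmetric (@clstar_adj u v C).
Proof. by move=> [a|] [b|] //=; rewrite adj_sym. Qed.

Lemma clstar_adj_irr u v C : irreflexive (@clstar_adj u v C).
Proof. by move=> [a|] //=; rewrite adj_irr. Qed.

Definition clstar (u v : G) (C : {set G}) : sgraph :=
  @SGraph (option (ind_vert (C :|: [set u; v]))) (@clstar_adj u v C)
          (@clstar_adj_sym u v C) (@clstar_adj_irr u v C).

End Graphs.

Definition no_cycle_unique_chord (G : sgraph) : Prop :=
  forall c : seq G, is_cycle c -> #|chords c| != 1.

Definition hereditary (P : sgraph -> Prop) : Prop :=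
  forall (G : sgraph) (S : {set G}), P G -> P (induced S).

Definition two_cutset_safe (P : sgraph -> Prop) : Prop :=
  hereditary P /\
  forall G : sgraph, P G -> ~ has_1cutset G ->
  forall u v : G, two_cutset u v ->
  forall C : {set G}, component [set u; v] C ->
  P (cl u v C) \/ P (clstar u v C).

From mathcomp Require Import all_boot zify.
Set Implicit Arguments. Unset Strict Implicit. Unset Printing Implicit Defensive.

(* If uv is an edge, cl(C) is an induced subgraph of G. Otherwise pick a vertex d
   outside C ∪ {u, v}. A path from d to C must enter C through u or v, so, as
   neither u nor v is a cut vertex, d is joined to both u and v in G \ C. A
   shortest u-v path in G \ C is then chordless, and its interior lies outside
   C ∪ {u, v}, hence has no neighbour in C. Substituting this interior for the
   subdivision vertex of cl*(C) turns a cycle of cl*(C) into a cycle of G with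
   the same chords: in both cycles the chords are exactly those of the common
   path, because neither the subdivision vertex (of degree 2) nor an inner vertex
   of the chordless path lies on a chord. *)

Section CyclicSequences.
Variable T : eqType.
Implicit Types (s r c : seq T) (a b x : T).

Definition consecutive s a b :=
  (index b s == (index a s).+1) || (index a s == (index b s).+1).

Definition cycle_edge c a b := (next c a == b) || (next c b == a).

Lemma consecutiveC s a b : consecutive s a b = consecutive s b a.
Proof. exact: orbC. Qed.

Lemma cycle_edgeC c a b : cycle_edge c a b = cycle_edge c b a.
Proof. exact: orbC. Qed.

Lemma cycle_edge_rot n c a b : uniq c -> cycle_edge (rot n c) a b = cycle_edge c a b.
Proof. by move=> Uc; rewrite /cycle_edge !next_rot. Qed.

Lemma next_index c a b : uniq c -> a \in c -> b \in c -> (index a c).+1 < size c ->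
  (next c a == b) = (index b c == (index a c).+1).
Proof.
move=> Uc ac bc lt_ac; rewrite next_nth ac.
case: c Uc ac bc lt_ac => // z c' Uc ac bc lt_ac.
rewrite -[nth z c' _]/(nth z (z :: c') (index a (z :: c')).+1).
by rewrite -{1}(nth_index z bc) nth_uniq // ?index_mem // eq_sym.
Qed.

Lemma next_cat_index s r a b : uniq (s ++ r) -> a \in s -> b \in s ->
  (index a s).+1 < size (s ++ r) ->
  (next (s ++ r) a == b) = (index b s == (index a s).+1).
Proof.
move=> U as_ bs lt_a; have mem_sr z : z \in s -> z \in s ++ r by rewrite mem_cat => ->.
by rewrite next_index ?mem_sr // ?index_cat ?as_ ?bs.
Qed.

Lemma consecutive_cycle_edge s r a b : uniq (s ++ r) -> a \in s -> b \in s ->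
  consecutive s a b -> cycle_edge (s ++ r) a b.
Proof.
move=> U as_ bs; have lt z : z \in s -> index z s < size (s ++ r).
  by rewrite -index_mem size_cat => /leq_trans->; rewrite ?leq_addr.
by case/orP => /eqP ab; apply/orP; [left | right];
  rewrite next_cat_index ?ab // -ab lt.
Qed.

Lemma cycle_edge_cat s r a b : uniq (s ++ r) -> r != [::] -> a \in s -> b \in s ->
  cycle_edge (s ++ r) a b = consecutive s a b.
Proof.
move=> U r0 as_ bs; have lt z : z \in s -> (index z s).+1 < size (s ++ r).
  by rewrite -index_mem size_cat; move: r0; rewrite -size_eq0; lia.
by rewrite /cycle_edge !next_cat_index ?lt.
Qed.

Lemma next_next_neq c a : uniq c -> 2 < size c -> a \in c -> next c (next c a) != a.
Proof.
move=> Uc c3 /rot_to[i s def_c]; rewrite -!(next_rot i Uc) def_c.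
have : uniq (a :: s) by rewrite -def_c rot_uniq.
have : 2 < size (a :: s) by rewrite -def_c size_rot.
case: s {def_c} => [|b [|b' s]] //= _; rewrite !inE !eqxx negb_or -!andbA.
by case/and5P => ab /norP[ab' _] _ _ _; rewrite [b == a]eq_sym (negbTE ab) eq_sym.
Qed.

Lemma last_take x s i : i <= size s -> last x (take i s) = nth x (x :: s) i.
Proof.
elim: s x i => [|y s IH] x [|i] //= le_is.
by rewrite IH // (set_nth_default x) // ltnS.
Qed.

Lemma path_shortcut (e : rel T) x s i j :
  path e x s -> uniq (x :: s) -> i < j < size s -> e (nth x (x :: s) i) (nth x s j) ->
  exists s', [/\ path e x s', last x s' = last x s, uniq (x :: s') & size s' < size s].
Proof.
move=> es Us /andP[ij js] e_ij; exists (take i s ++ drop j s).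
have ej : path e (nth x s j) (drop j.+1 s).
  by move: es; rewrite -{1}(cat_take_drop j.+1 s) cat_path last_take // => /andP[].
have last_s : last x s = last (nth x s j) (drop j.+1 s).
  by rewrite -{1}(cat_take_drop j.+1 s) last_cat last_take.
rewrite (drop_nth x js) cat_path last_cat last_cons last_take; last by lia.
split.
- by rewrite (take_path _ es) /= e_ij ej.
- by rewrite last_s.
- apply: subseq_uniq Us; rewrite -(drop_nth x js) /= eqxx.
  rewrite -[X in subseq _ X](cat_take_drop i s) cat_subseq //.
  by rewrite -(subnK (ltnW ij)) -drop_drop drop_subseq.
- by rewrite size_cat /= size_take size_drop; case: ifP; lia.
Qed.

End CyclicSequences.

Section Chords.
Variable G : sgraph.
Implicit Types (s r c : seq G) (a b x y : G) (X : {set G}).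

Definition chordless s : Prop := {in s &, forall a b, adj a b -> consecutive s a b}.

Definition path_chords s : {set {set G}} :=
  [set [set a; b] | a in s, b in s & adj a b && ~~ consecutive s a b].

Lemma chordsP c A :
  reflect (exists a b, [/\ a \in c, b \in c, adj a b, ~~ cycle_edge c a b & A = [set a; b]])
          (A \in chords c).
Proof.
apply: (iffP imset2P) => [[a b ac] | [a [b [ac bc ab nab ->]]]].
  by rewrite inE => /andP[bc /andP[ab nab]] ->; exists a, b; rewrite /cycle_edge negb_or.
by exists a b => //; rewrite inE bc ab -negb_or.
Qed.

Lemma path_chordsP s A :
  reflect (exists a b, [/\ a \in s, b \in s, adj a b, ~~ consecutive s a b & A = [set a; b]])
          (A \in path_chords s).
Proof.
apply: (iffP imset2P) => [[a b as_] | [a [b [as_ bs ab nab ->]]]].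
  by rewrite inE => /andP[bs /andP[ab nab]] ->; exists a, b.
by exists a b => //; rewrite inE bs ab nab.
Qed.

Lemma chords_cat s r : uniq (s ++ r) -> r != [::] ->
  {in r & s ++ r, forall z w, adj z w -> cycle_edge (s ++ r) z w} ->
  chords (s ++ r) = path_chords s.
Proof.
move=> U r0 r_edges; have in_s z w : z \in s ++ r -> w \in s ++ r -> adj z w ->
    ~~ cycle_edge (s ++ r) z w -> z \in s.
  rewrite mem_cat => /orP[// | zr] ws zw; by rewrite r_edges.
apply/setP => A; apply/chordsP/path_chordsP => -[a [b [a_in b_in ab nab ->]]].
  have as_ := in_s a b a_in b_in ab nab.
  have bs : b \in s by rewrite (in_s b a) // 1?adj_sym // cycle_edgeC.
  by exists a, b; rewrite -(cycle_edge_cat U r0 as_ bs).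
have mem_sr z : z \in s -> z \in s ++ r by rewrite mem_cat => ->.
by exists a, b; rewrite ?mem_sr ?cycle_edge_cat.
Qed.

Lemma rot_is_cycle n c : is_cycle (rot n c) = is_cycle c.
Proof. by rewrite /is_cycle rot_uniq size_rot rot_cycle. Qed.

Lemma chords_rot n c : uniq c -> chords (rot n c) = chords c.
Proof.
move=> Uc; apply/setP => A; apply/chordsP/chordsP => -[a [b [ac bc ab nab ->]]];
  exists a, b; by move: ac bc nab; rewrite !mem_rot cycle_edge_rot.
Qed.

Lemma cycle_edge_deg2 c z : is_cycle c -> z \in c -> #|[set w | adj z w]| <= 2 ->
  {in c, forall w, adj z w -> cycle_edge c z w}.
Proof.
case/and3P => Uc c3 cc zc deg_z w _ zw.
have z_next : adj z (next c z) := next_cycle cc zc.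
have z_prev : adj z (prev c z) by rewrite adj_sym; apply: prev_cycle.
have next_ne_prev : next c z != prev c z.
  by apply: contraNneq (next_next_neq Uc c3 zc) => ->; rewrite next_prev.
have nbr_z : [set w | adj z w] = [set next c z; prev c z].
  apply/esym/eqP; rewrite eqEcard cards2 next_ne_prev (leq_trans deg_z) // andbT.
  by rewrite subUset !sub1set !inE z_next z_prev.
have : w \in [set w | adj z w] by rewrite inE.
rewrite nbr_z !inE /cycle_edge.
case/orP => /eqP ->; first by rewrite eqxx.
by rewrite next_prev // eqxx orbT.
Qed.

Lemma adj_minus_sym X : symmetric (adj_minus X).
Proof. by move=> a b; rewrite /adj_minus /= adj_sym [(a \notin X) && _]andbC. Qed.

Lemma path_adj_minus_notin X x p : x \notin X -> path (adj_minus X) x p ->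
  forall z, z \in x :: p -> z \notin X.
Proof.
elim: p x => [|y p IH] x xX; first by move=> _ z; rewrite inE => /eqP->.
rewrite /= => /andP[/and3P[_ _ yX] /(IH y yX) sub_p] z.
by rewrite inE => /orP[/eqP-> // | /sub_p].
Qed.

Lemma chordless_path X x y : x \notin X -> connect (adj_minus X) x y ->
  exists p, [/\ path (adj_minus X) x p, last x p = y, uniq (x :: p) & chordless (x :: p)].
Proof.
(* A shortest path is chordless, since a chord would shortcut it. *)
move=> xX /connectP[p0 + ->] => /shortenP[p p_path p_uniq _] {p0}.
have [n] := ubnP (size p); elim: n => // n IHn in p p_path p_uniq *.
rewrite ltnS => size_p.
pose chord (ab : G * G) :=
  [&& ab.1 \in x :: p, ab.2 \in x :: p, adj ab.1 ab.2 & ~~ consecutive (x :: p) ab.1 ab.2].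
case: (pickP chord) => [[a b] /and4P[] /= ap bp ab nab | no_chord]; last first.
  exists p; split=> // a b ap bp ab; apply: contraT => nab.
  by have /= := no_chord (a, b); rewrite /chord /= ap bp ab nab.
wlog lt_ab : a b ap bp ab nab / index a (x :: p) < index b (x :: p).
  move=> wlog_ab; case: (ltngtP (index a (x :: p)) (index b (x :: p))) => [|gt_ab|eq_ab].
  - exact: wlog_ab.
  - by apply: (wlog_ab b a); rewrite // 1?adj_sym 1?consecutiveC.
  - by move: ab; rewrite -(nth_index x ap) eq_ab nth_index // adj_irr.
move: lt_ab nab; rewrite /consecutive.
case def_j: (index b (x :: p)) => [//|j] lt_ab /norP[nab _].
have ij : index a (x :: p) < j < size p.
  by rewrite -ltnS ltn_neqAle lt_ab eq_sym nab -ltnS -def_j index_mem.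
have e_ij : adj_minus X (nth x (x :: p) (index a (x :: p))) (nth x p j).
  rewrite nth_index // -[nth x p j]/(nth x (x :: p) j.+1) -def_j nth_index //.
  have notX := path_adj_minus_notin xX p_path.
  by rewrite /adj_minus /= ab notX // notX.
have [p' [p'_path p'_last p'_uniq p'_size]] := path_shortcut p_path p_uniq ij e_ij.
have [q [q_path q_last q_uniq q_chordless]] := IHn p' p'_path p'_uniq (leq_trans p'_size size_p).
by exists q; rewrite q_last p'_last.
Qed.

End Chords.

Lemma set2_imset (A B : finType) (f : A -> B) x y : f @: [set x; y] = [set f x; f y].
Proof. by rewrite imsetU !imset_set1. Qed.

Section Embeddings.
Variables (H G : sgraph) (f : H -> G).
Hypothesis f_inj : injective f.

Lemma map_cycle_chords (c : seq H) :
  {in c &, forall a b, adj (f a) (f b) = adj a b} -> is_cycle c ->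
  is_cycle (map f c) /\ #|chords (map f c)| = #|chords c|.
Proof.
move=> f_adj /and3P[Uc c3 cc]; have Ufc : uniq (map f c) by rewrite map_inj_uniq.
split.
  apply/and3P; split; rewrite ?size_map // cycle_map.
  apply: (sub_in_cycle (P := mem c)) cc; last exact/allP.
  by move=> a b ac bc; rewrite /= f_adj.
suff -> : chords (map f c) = [set f @: A | A : {set H} in chords c].
  by rewrite card_imset //; apply: imset_inj.
have cycle_edge_map a b : cycle_edge (map f c) (f a) (f b) = cycle_edge c a b.
  by rewrite /cycle_edge !next_map // !(inj_eq f_inj).
apply/setP => A; apply/chordsP/imsetP => [[_ [_ [/mapP[a ac ->] /mapP[b bc ->] ab nab ->]]] |
                                          [_ /chordsP[a [b [ac bc ab nab ->]]] ->]].
  exists [set a; b]; last by rewrite set2_imset.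
  by apply/chordsP; exists a, b; rewrite -f_adj // -cycle_edge_map.
by exists (f a), (f b); rewrite set2_imset ?map_f ?f_adj ?cycle_edge_map.
Qed.

Lemma path_chords_map (s : seq H) : {in s &, forall a b, adj (f a) (f b) = adj a b} ->
  #|path_chords (map f s)| = #|path_chords s|.
Proof.
move=> f_adj; suff -> : path_chords (map f s) = [set f @: A | A : {set H} in path_chords s].
  by rewrite card_imset //; apply: imset_inj.
have consecutive_map a b : consecutive (map f s) (f a) (f b) = consecutive s a b.
  by rewrite /consecutive !index_map.
apply/setP => A; apply/path_chordsP/imsetP => [[_ [_ [/mapP[a as_ ->] /mapP[b bs ->] ab nab ->]]] |
                                              [_ /path_chordsP[a [b [as_ bs ab nab ->]]] ->]].
  exists [set a; b]; last by rewrite set2_imset.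
  by apply/path_chordsP; exists a, b; rewrite -f_adj // -consecutive_map.
by exists (f a), (f b); rewrite set2_imset ?map_f ?f_adj ?consecutive_map.
Qed.

Lemma embedding_no_cycle_unique_chord :
  (forall a b, adj (f a) (f b) = adj a b) ->
  no_cycle_unique_chord G -> no_cycle_unique_chord H.
Proof.
move=> f_adj HG c cyc.
have [fcyc <-] := map_cycle_chords (fun a b _ _ => f_adj a b) cyc.
exact: HG.
Qed.

End Embeddings.

Lemma induced_no_cycle_unique_chord : hereditary no_cycle_unique_chord.
Proof. by move=> G S; apply: (@embedding_no_cycle_unique_chord (induced S) G val val_inj). Qed.

Lemma adj_in_pair (G : sgraph) (u v a b : G) :
  a \in [set u; v] -> b \in [set u; v] -> a != b -> adj a b = adj u v.
Proof.
by rewrite !inE => /orP[]/eqP-> /orP[]/eqP->; rewrite ?eqxx // adj_sym.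
Qed.

Lemma set2_eq (T : finType) (u v x y : T) :
  x \in [set u; v] -> y \in [set u; v] -> x != y -> [set x; y] = [set u; v].
Proof.
move=> xuv yuv xy; apply/eqP; rewrite eqEcard subUset !sub1set xuv yuv !cards2 xy.
by case: (u != v).
Qed.

Lemma cl_no_cycle_unique_chord (G : sgraph) (u v : G) (C : {set G}) :
  adj u v -> no_cycle_unique_chord G -> no_cycle_unique_chord (cl u v C).
Proof.
move=> uv; apply: (@embedding_no_cycle_unique_chord (cl u v C) G val val_inj) => a b.
rewrite /= /cl_adj; case: (boolP (adj (val a) (val b))) => [ab | nab].
  by apply/esym/andP; split; first by apply: contraTneq ab => ->; rewrite adj_irr.
apply/esym/negbTE; apply: contraNN nab => /andP[ab /eqP eq_ab].
have := set21 (val a) (val b); have := set22 (val a) (val b); rewrite eq_ab => buv auv.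
by rewrite (adj_in_pair auv buv).
Qed.

Section Component.
Variables (G : sgraph) (X C : {set G}).
Hypothesis compC : component X C.

Lemma component_witness : exists x0, x0 \in C.
Proof. by case: compC => x0 x0X ->; exists x0; rewrite inE x0X connect0. Qed.

Lemma component_notin z : z \in C -> z \notin X.
Proof. by case: compC => x0 _ ->; rewrite inE => /andP[]. Qed.

Lemma component_nbhd z w : z \in C -> adj z w -> w \in C :|: X.
Proof.
case: compC => x0 _ defC; rewrite defC !inE => /andP[zX x0z] zw.
case: (boolP (w \in X)) => wX; rewrite ?orbT //= orbF (connect_trans x0z) //.
by apply: connect1; rewrite /adj_minus /= zw zX.
Qed.

Lemma component_connect : {in C &, forall a b, connect (adj_minus X) a b}.
Proof.
case: compC => x0 _ -> a b; rewrite !inE => /andP[_ x0a] /andP[_ x0b].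
by rewrite (connect_trans _ x0b) // (sym_connect_sym (@adj_minus_sym G X)).
Qed.

End Component.

Lemma two_cutset_outside (G : sgraph) (u v : G) (C : {set G}) :
  two_cutset u v -> component [set u; v] C -> exists d, d \notin C :|: [set u; v].
Proof.
move=> [_ [a [b [aX bX nab]]]] compC.
case: (boolP (a \in C)) => aC; last by exists a; rewrite inE negb_or aC.
case: (boolP (b \in C)) => bC; last by exists b; rewrite inE negb_or bC.
by rewrite (component_connect compC) in nab.
Qed.

Lemma connect_to_cut (G : sgraph) (C : {set G}) (u v x0 d : G) :
  ~ has_1cutset G -> (forall z w, z \in C -> adj z w -> w \in C :|: [set u; v]) ->
  x0 \in C -> v \notin C -> d \notin C -> d != v -> connect (adj_minus C) d u.
Proof.
move=> no_cut C_nbhd x0C vC dC dv; apply: contraT => du; exfalso; apply: no_cut.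
exists v, d, x0; split; rewrite ?inE //; first by apply: contraNneq vC => <-.
(* The vertices of G \ C not joined to u in G \ C form a union of components of
   G \ {v} that contains d but not x0. *)
pose A := [set z | (z \notin C) && ~~ connect (adj_minus C) z u].
have closedA : closed (adj_minus [set v]) A.
  apply: intro_closed; first exact/sym_connect_sym/adj_minus_sym.
  move=> z w /and3P[zw zv _]; rewrite !inE => /andP[zC zu].
  have wC : w \notin C.
    apply: contra zC => wC; have := C_nbhd w z wC; rewrite adj_sym !inE => /(_ zw).
    rewrite inE in zv; case/or3P => // /eqP z_eq; last by rewrite z_eq eqxx in zv.
    by rewrite z_eq connect0 in zu.
  rewrite wC; apply: contra zu => wu; apply: connect_trans wu.
  by apply: connect1; rewrite /adj_minus /= zw zC.
by apply/negP => /(closed_connect closedA); rewrite !inE dC du x0C.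
Qed.

Section SubdividedClosure.
Variables (G : sgraph) (u v : G) (C : {set G}) (d : G).
Hypotheses (HG : no_cycle_unique_chord G) (nadj_uv : ~~ adj u v)
  (uv_notin_C : forall z, z \in [set u; v] -> z \notin C)
  (C_nbhd : forall z w, z \in C -> adj z w -> w \in C :|: [set u; v])
  (d_out : d \notin C :|: [set u; v])
  (conn_uv : connect (adj_minus C) u v).

Local Notation S := (C :|: [set u; v]).
Local Notation H := (clstar u v C).

(* [d] only serves to make [of_clstar] injective. *)
Definition of_clstar (o : H) : G := if o is Some a then val a else d.

Lemma of_clstar_inj : injective of_clstar.
Proof.
move=> [a|] [b|] //= => [/val_inj-> // | ad | db].
  by move: d_out; rewrite -ad (valP a).
by move: d_out; rewrite db (valP b).
Qed.

Lemma of_clstar_adj (o o' : H) : o != None -> o' != None ->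
  adj (of_clstar o) (of_clstar o') = adj o o'.
Proof. by case: o; case: o'. Qed.

Lemma of_clstar_path (x : H) p : None \notin x :: p -> path (@adj H) x p ->
  path (@adj G) (of_clstar x) (map of_clstar p).
Proof.
move=> Nxp; rewrite path_map; apply: (sub_in_path (P := predC1 None)).
- by move=> o o' /= o_ne o'_ne; rewrite of_clstar_adj.
- by apply/allP => o; apply: contraTneq => ->.
Qed.

Lemma of_clstar_nbr (o : H) : adj (None : H) o -> of_clstar o \in [set u; v].
Proof. by case: o. Qed.

Lemma subdivision_deg2 : #|[set o : H | adj (None : H) o]| <= 2.
Proof.
rewrite -(card_imset _ of_clstar_inj) (leq_trans (subset_leq_card (B := [set u; v]) _)) //.
  by apply/subsetP => _ /imsetP[o + ->]; rewrite inE; apply: of_clstar_nbr.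
by rewrite cards2; case: (u != v).
Qed.

Lemma uv_connect : {in [set u; v] &, forall a b, connect (adj_minus C) a b}.
Proof.
move=> a b; rewrite !inE => /orP[]/eqP-> /orP[]/eqP->;
  by rewrite // (sym_connect_sym (@adj_minus_sym G C)).
Qed.

Definition detour (y x : G) (q : seq G) : Prop :=
  [/\ q != [::], path (@adj G) y (rcons q x), uniq (y :: rcons q x),
      chordless (y :: rcons q x) & forall z, z \in q -> z \notin S].

Lemma detour_exists x y : x \in [set u; v] -> y \in [set u; v] -> x != y ->
  exists q, detour y x q.
Proof.
move=> xuv yuv xy.
have [p [p_path p_last p_uniq p_chordless]] := chordless_path (uv_notin_C yuv) (uv_connect yuv xuv).
case/lastP: p p_path p_last p_uniq p_chordless => [/= _ yx | q x']; first by rewrite yx eqxx in xy.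
rewrite last_rcons => p_path x'x; subst x' => p_uniq p_chordless; exists q; split => //.
- apply: contraNneq nadj_uv => q0; move: p_path; rewrite q0 /= andbT => /and3P[yx _ _].
  by rewrite -(adj_in_pair yuv xuv) // eq_sym.
- by apply: sub_path p_path => a b /and3P[].
- move=> z zq; rewrite in_setU negb_or (path_adj_minus_notin (uv_notin_C yuv) p_path) /=;
    last by rewrite inE mem_rcons inE zq !orbT.
  rewrite -(set2_eq xuv yuv xy) !inE negb_or.
  move: p_uniq; rewrite /= mem_rcons inE rcons_uniq negb_or => /and3P[/andP[_ yq] xq _].
  by apply/andP; split; [apply: contraNneq xq | apply: contraNneq yq] => <-.
Qed.

Lemma cycle_detour (m q : seq G) x y :
  x \in [set u; v] -> y \in [set u; v] -> uniq (x :: rcons m y) ->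
  {subset x :: rcons m y <= S} -> path (@adj G) x (rcons m y) -> detour y x q ->
  is_cycle (x :: rcons m y ++ q) /\ chords (x :: rcons m y ++ q) = path_chords (x :: rcons m y).
Proof.
move=> xuv yuv Ut t_S t_path [q0 q_path Uq q_chordless q_out].
have xy : x != y by move: Ut; rewrite /= mem_rcons inE negb_or => /andP[/andP[]].
have Uc : uniq ((x :: rcons m y) ++ q).
  rewrite cat_uniq Ut; move: Uq; rewrite /= rcons_uniq => /and3P[_ _ ->]; rewrite andbT.
  by apply/hasPn => z /q_out; apply: contra; apply: t_S.
split.
  apply/and3P; split => //.
    by rewrite /= size_cat size_rcons ltnS addSn ltnS addn_gt0 [0 < size q]lt0n size_eq0 q0 orbT.
  by rewrite /cycle rcons_cat cat_path last_rcons t_path.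
apply: (chords_cat (s := x :: rcons m y)) => // z w zq wc zw.
set P := y :: rcons q x.
(* After a rotation the chordless path [P] is a prefix of the cycle, so vertices
   consecutive on [P] are neighbours on the cycle. *)
have rot_c : rot (size (x :: m)) ((x :: rcons m y) ++ q) = P ++ m.
  have -> : (x :: rcons m y) ++ q = (x :: m) ++ (y :: q) by rewrite /= cat_rcons.
  by rewrite rot_size_cat /P /= cat_rcons.
have wP : w \in P.
  move: wc; rewrite mem_cat => /orP[/t_S | wq]; last by rewrite /P inE mem_rcons inE wq !orbT.
  rewrite inE => /orP[wC | wuv].
    by have := q_out z zq; rewrite (C_nbhd wC) // adj_sym.
  by move: wuv; rewrite -(set2_eq xuv yuv xy) /P !inE mem_rcons inE => /orP[]->; rewrite ?orbT.
have zP : z \in P by rewrite /P inE mem_rcons inE zq !orbT.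
rewrite -(cycle_edge_rot (size (x :: m)) _ _ Uc) rot_c.
by apply: consecutive_cycle_edge => //; [rewrite -rot_c rot_uniq | apply: q_chordless].
Qed.

Lemma cycle_avoiding_subdivision (c : seq H) : is_cycle c -> None \notin c -> #|chords c| != 1.
Proof.
move=> cyc Nc; have ne_None o : o \in c -> o != None by move=> oc; apply: contraNneq Nc => <-.
have [cyc' <-] := map_cycle_chords of_clstar_inj
  (fun o o' oc o'c => of_clstar_adj (ne_None o oc) (ne_None o' o'c)) cyc.
exact: HG.
Qed.

Lemma cycle_through_subdivision (s : seq H) :
  is_cycle (s ++ [:: None]) -> #|chords (s ++ [:: None])| != 1.
Proof.
move=> cyc; have /and3P[Uc c3 cc] := cyc.
have chords_c : chords (s ++ [:: None]) = path_chords s.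
  apply: chords_cat => // z w; rewrite inE => /eqP-> wc.
  by apply: cycle_edge_deg2 cyc _ subdivision_deg2 w wc; rewrite mem_cat mem_head orbT.
have /andP[Us Ns] : uniq s && (None \notin s).
  by move: Uc; rewrite cat_uniq /= orbF andbT andbC.
have f_adj : {in s &, forall o o', adj (of_clstar o) (of_clstar o') = adj o o'}.
  by move=> o o' os o's; rewrite of_clstar_adj //; apply: contraNneq Ns => <-.
case: s cyc Uc c3 cc chords_c Us Ns f_adj => [//|a s'].
case/lastP: s' => [//|m b] _ _ _ cc chords_c Us Ns f_adj.
move: cc; rewrite /cycle /= rcons_cat cat_path last_rcons /= andbT => /and3P[t_path bN Na].
have [x_uv y_uv] : of_clstar a \in [set u; v] /\ of_clstar b \in [set u; v].
  by split; apply: of_clstar_nbr; rewrite // clstar_adj_sym.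
have xy : of_clstar a != of_clstar b.
  by rewrite (inj_eq of_clstar_inj); move: Us; rewrite /= mem_rcons inE negb_or => /andP[/andP[]].
have [q detq] := detour_exists x_uv y_uv xy.
have Ut : uniq (map of_clstar (a :: rcons m b)) by rewrite (map_inj_uniq of_clstar_inj).
have t_S : {subset map of_clstar (a :: rcons m b) <= S}.
  by move=> _ /mapP[[a'|] ot ->]; [exact: valP | rewrite ot in Ns].
have ft_path := of_clstar_path Ns t_path.
rewrite /= map_rcons in Ut t_S ft_path.
have [cyc' chords'] := cycle_detour x_uv y_uv Ut t_S ft_path detq.
by rewrite chords_c -(path_chords_map of_clstar_inj f_adj) /= map_rcons -chords'; apply: HG.
Qed.

Lemma clstar_no_cycle_unique_chord : no_cycle_unique_chord H.
Proof.
move=> c cyc; case: (boolP (None \in c)) => Nc; last exact: cycle_avoiding_subdivision.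
have Uc : uniq c by case/and3P: cyc.
case/rot_to: Nc => i s def_c.
have Us : uniq (None :: s : seq H) by rewrite -def_c rot_uniq.
rewrite -(chords_rot i Uc) def_c -(chords_rot 1 Us) rot1_cons -cats1.
by apply: cycle_through_subdivision; rewrite cats1 -rot1_cons rot_is_cycle -def_c rot_is_cycle.
Qed.

End SubdividedClosure.

Theorem mainTheorem10 : two_cutset_safe no_cycle_unique_chord.
Proof.
split; first exact: induced_no_cycle_unique_chord.
move=> G HG no_cut u v cut_uv C compC.
have [d d_out] := two_cutset_outside cut_uv compC.
have [auv | nauv] := boolP (adj u v); [left; exact: cl_no_cycle_unique_chord | right].
have uv_notin_C z : z \in [set u; v] -> z \notin C.
  by move=> zuv; apply: contraL zuv => zC; apply: (component_notin compC zC).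
have C_nbhd := component_nbhd compC.
have [x0 x0C] := component_witness compC.
move: (d_out); rewrite !inE !negb_or => /and3P[dC du dv].
have d_u : connect (adj_minus C) d u.
  by apply: connect_to_cut no_cut C_nbhd x0C _ dC dv; rewrite uv_notin_C // set22.
have d_v : connect (adj_minus C) d v.
  apply: connect_to_cut no_cut _ x0C _ dC du; last by rewrite uv_notin_C // set21.
  by move=> z w zC zw; rewrite [[set v; u]]setUC (C_nbhd z w zC zw).
apply: clstar_no_cycle_unique_chord HG nauv uv_notin_C C_nbhd d_out _.
by rewrite (connect_trans _ d_v) // (sym_connect_sym (@adj_minus_sym G C)).
Qed.
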